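(* Let $q\geq 23$. If $(x_0,x_1,x_2)$ is a state of nonnegative integers with $wt_q(x_0,x_1,x_2)=2^q$ and $x_2\geq q^2$, then Paul has a strategy (a choice of legal questions depending on Carole's previous answers) such that, whatever Carole answers, after exactly $q$ rounds the state $\vec{z}$ satisfies $wt_0(\vec{z})=1$, and every intermediate state $(u_0,u_1,u_2)$ reached after playing $q-j$ rounds satisfies $wt_j(u_0,u_1,u_2)=2^j$.
   Context: Liar game with $2$ lies: a state is $\vec{x}=(x_0,x_1,x_2)$ of nonnegative integers; in each round Paul chooses a legal question $\vec{a}=(a_0,a_1,a_2)$ with integers $0\leq a_i\leq x_i$, and Carole answers Y or N; the next state is $(a_0,\,a_1+x_0-a_0,\,a_2+x_1-a_1)$ after Y, or $(x_0-a_0,\,x_1-a_1+a_0,\,x_2-a_2+a_1)$ after N. Weight: $wt_j(x_0,x_1,x_2)=x_0\binom{j}{\leq 2}+x_1\binom{j}{\leq 1}+x_2$, with $\binom{j}{\leq m}=\sum_{i=0}^m\binom{j}{i}$ (so $wt_0(\vec{z})=z_0+z_1+z_2$). *)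

From mathcomp Require Import all_boot.
Set Implicit Arguments. Unset Strict Implicit. Unset Printing Implicit Defensive.

Definition state := (nat * nat * nat)%type.

Definition s0 (x : state) : nat := x.1.1.
Definition s1 (x : state) : nat := x.1.2.
Definition s2 (x : state) : nat := x.2.

Definition binom_le (j m : nat) : nat := \sum_(i < m.+1) 'C(j, i).

Definition wt (j : nat) (x : state) : nat :=
  s0 x * binom_le j 2 + s1 x * binom_le j 1 + s2 x.

Definition legal (x a : state) : Prop :=
  s0 a <= s0 x /\ s1 a <= s1 x /\ s2 a <= s2 x.

Definition yes_state (x a : state) : state :=
  (s0 a, s1 a + (s0 x - s0 a), s2 a + (s1 x - s1 a)).

Definition no_state (x a : state) : state :=
  (s0 x - s0 a, s1 x - s1 a + s0 a, s2 x - s2 a + s1 a).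

Fixpoint perfect (j : nat) (x : state) : Prop :=
  match j with
  | 0 => wt 0 x = 1
  | j'.+1 => wt j x = 2 ^ j /\
      exists a : state, legal x a /\
        perfect j' (yes_state x a) /\ perfect j' (no_state x a)
  end.

From mathcomp Require Import all_boot zify.

Set Implicit Arguments.
Unset Strict Implicit.
Unset Printing Implicit Defensive.

(* Paul keeps the game perfect: weight is conserved,
   wt_k(yes) + wt_k(no) = wt_{k+1}(x), so it suffices to split 2^(k+1) into
   2^k + 2^k at every round.  He asks for half of x0 (rounded down) and picks
   a1, a2 so that answer Y leaves weight exactly 2^k.  The rounding errors are
   absorbed by the last two coordinates, which stays possible as long as x0 is
   tiny compared with 2^k and x1 or x2 is large (the invariant [safe]).  This
   invariant is preserved down to 8 remaining rounds, where a finite search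
   over the few safe states finishes the game. *)

Lemma binom_le1 j : binom_le j 1 = j.+1.
Proof. by rewrite /binom_le !big_ord_recr big_ord0 /= bin0 bin1. Qed.

Lemma binom_le2 j : binom_le j 2 = j.+1 + 'C(j, 2).
Proof. by rewrite /binom_le !big_ord_recr big_ord0 /= bin0 bin1. Qed.

Definition wt_closed (j : nat) (x : state) : nat :=
  s0 x * (j.+1 + 'C(j, 2)) + s1 x * j.+1 + s2 x.

Lemma wtE j x : wt j x = wt_closed j x.
Proof. by rewrite /wt binom_le1 binom_le2. Qed.

Lemma double_bin2 k : 2 * 'C(k, 2) + k = k * k.
Proof. by elim: k => // k IH; rewrite binS bin1; lia. Qed.

Lemma wt_yes_no k x a :
  legal x a -> wt k (yes_state x a) + wt k (no_state x a) = wt k.+1 x.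
Proof.
case: x a => [[x0 x1] x2] [[a0 a1] a2]; rewrite /legal /s0 /s1 /s2 /=.
case=> le_a0 [le_a1 le_a2].
have [b0 ->] : exists b0, x0 = a0 + b0 by exists (x0 - a0); lia.
have [b1 ->] : exists b1, x1 = a1 + b1 by exists (x1 - a1); lia.
have [b2 ->] : exists b2, x2 = a2 + b2 by exists (x2 - a2); lia.
rewrite !wtE /wt_closed /yes_state /no_state /s0 /s1 /s2 /= binS bin1 !addKn.
lia.
Qed.

Lemma cubic_lt_exp2 k : 12 <= k -> 3 * k ^ 3 + 11 * k ^ 2 + 12 * k < 2 ^ k.+1.
Proof.
move=> le12k; rewrite -(subnK le12k); elim: (k - 12) => [|n IH] //.
rewrite addSn [2 ^ _.+2]expnS; nia.
Qed.

Lemma large_x1_or_x2 k y0 y1 y2 :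
  9 <= k -> wt k (y0, y1, y2) = 2 ^ k -> 277 * y0 < 2 ^ k + 277 ->
  y0 <= y1.+1 -> 3 * k <= y1 \/ k ^ 2 <= y2.
Proof.
rewrite wtE /wt_closed /s0 /s1 /s2 /= => le9k wt_y y0_small y0_y1.
case: (leqP (3 * k) y1) => [|y1_small]; first by left.
case: (leqP (k ^ 2) y2) => [|y2_small]; first by right.
exfalso; have T2 := double_bin2 k.
have [k_small | /cubic_lt_exp2 k_large] := ltnP k 12.
- move: T2 wt_y y0_small y1_small y2_small.
  have : k = 9 \/ k = 10 \/ k = 11 by lia.
  by case=> [|[|]] ->; lia.
- rewrite [2 ^ _]expnS in k_large.
  have : y0 * (k.+1 + 'C(k, 2)) <= 3 * k * (k.+1 + 'C(k, 2)).
    by apply: leq_mul; lia.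
  have : y1 * k.+1 <= 3 * k * k.+1 by apply: leq_mul; lia.
  have : k * (2 * 'C(k, 2) + k) = k * (k * k) by rewrite T2.
  lia.
Qed.

(* 277 = binom_le 23 2, so the bound on x0 holds initially; it reads
   x0 <= 2^j / 277 + 1 and thus survives halving x0 rounded up. *)
Definition safe (j : nat) (x : state) : Prop :=
  [/\ wt j x = 2 ^ j, 277 * s0 x < 2 ^ j + 277, 2 * j <= s2 x
    & 9 <= j -> 3 * j <= s1 x \/ j ^ 2 <= s2 x].

Lemma safe_of_bounds k y0 y1 y2 :
  wt k (y0, y1, y2) = 2 ^ k -> 277 * y0 < 2 ^ k + 277 -> 2 * k <= y2 ->
  y0 <= y1.+1 -> safe k (y0, y1, y2).
Proof.
move=> wt_y y0_small y2_large y0_y1; split=> // le9k.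
exact: large_x1_or_x2 le9k wt_y y0_small y0_y1.
Qed.

(* a2 is chosen so that answer Y leaves weight exactly 2^k. *)
Definition halving_question (k : nat) (x : state) (a1 : nat) : state :=
  let a0 := (s0 x)./2 in
  (a0, a1, 2 ^ k - wt_closed k (a0, a1 + (s0 x - a0), s1 x - a1)).

(* With e0 = odd x0, the question above has
   2 a2 = x2 + e0 'C(k, 2) + (x1 - 2 a1) k; the conditions say that
   0 <= a2 <= x2 and that both answers leave at least 2k in the last
   coordinate. *)
Definition balanced_split (k : nat) (x : state) (a1 : nat) : Prop :=
  let e0 := odd (s0 x) in let T := 'C(k, 2) in
  [/\ a1 <= s1 x,
      2 * a1 * k <= s2 x + e0 * T + s1 x * k,
      e0 * T + s1 x * k <= s2 x + 2 * a1 * k,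
      4 * k + 2 * a1 * k.+1 <= s2 x + e0 * T + s1 x * k.+2
    & 4 * k + e0 * T + s1 x * k <= s2 x + 2 * a1 * k.+1].

Lemma halving_step k x a1 :
  wt k.+1 x = 2 ^ k.+1 -> 277 * s0 x < 2 ^ k.+1 + 277 ->
  balanced_split k x a1 ->
  [/\ legal x (halving_question k x a1),
      safe k (yes_state x (halving_question k x a1))
    & safe k (no_state x (halving_question k x a1))].
Proof.
case: x => [[x0 x1] x2] wt_x.
rewrite /balanced_split /halving_question /s0 /s1 /s2 /=.
set e0 := odd x0; set h0 := x0./2; set T := 'C(k, 2).
set W := wt_closed k _ => x0_small [le_a1 C1 C2 C3 C4].
have Ex0 : x0 = e0 + 2 * h0 by rewrite /e0 /h0 mul2n odd_double_half.
have W_def : W = h0 * (k.+1 + T) + (a1 + (x0 - h0)) * k.+1 + (x1 - a1) by [].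
clearbody e0 h0 W; rewrite expnS in x0_small.
have W_eq : 2 * W + x2 + e0 * T + x1 * k = 2 * 2 ^ k + 2 * a1 * k.
  by move: wt_x; rewrite wtE /wt_closed /s0 /s1 /s2 /= binS bin1 -/T expnS; lia.
have legal_a : legal (x0, x1, x2) (h0, a1, 2 ^ k - W).
  by rewrite /legal /s0 /s1 /s2 /=; lia.
have wt_yes : wt k (yes_state (x0, x1, x2) (h0, a1, 2 ^ k - W)) = 2 ^ k.
  by rewrite wtE /wt_closed /yes_state /s0 /s1 /s2 /= -/T; lia.
have := wt_yes_no k legal_a; rewrite wt_yes wt_x expnS => wt_no.
move: wt_yes wt_no; rewrite /yes_state /no_state /s0 /s1 /s2 /= => wt_yes wt_no.
split=> //; apply: safe_of_bounds => //; lia.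
Qed.

Lemma balanced_split_even k x0 x1 x2 :
  8 <= k -> ~~ odd x0 -> 2 * k.+1 <= x2 -> 3 * k.+1 <= x1 \/ k.+1 ^ 2 <= x2 ->
  balanced_split k (x0, x1, x2) x1./2.
Proof.
rewrite /balanced_split /s0 /s1 /s2 /= => le8k /negbTE-> x2_large.
have := leq_mul le8k (leqnn k).
have Ex1 : x1 = odd x1 + 2 * x1./2 by rewrite mul2n odd_double_half.
move: (odd x1) (x1./2) Ex1 => [] h1 ->; split; lia.
Qed.

Lemma balanced_split_odd k x0 x1 x2 :
  8 <= k -> odd x0 -> 2 * k.+1 <= x2 -> 3 * k.+1 <= x1 \/ k.+1 ^ 2 <= x2 ->
  exists a1, balanced_split k (x0, x1, x2) a1.
Proof.
rewrite /balanced_split /s0 /s1 /s2 /= => le8k -> x2_large wide.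
have T2 := double_bin2 k; set T := 'C(k, 2) in T2 *.
have kk := leq_mul le8k (leqnn k).
set g := T %/ k.+1.
have ET : T = g * k.+1 + T %% k.+1 by rewrite -divn_eq.
have lt_r : T %% k.+1 < k.+1 by rewrite ltn_pmod.
have le_gk : g <= k.
  rewrite leqNgt; apply/negP => lt_kg.
  by have := leq_mul lt_kg (leqnn k.+1); lia.
move: (T %% k.+1) ET lt_r => r ET lt_r.
have [lt_gx1 | le_x1g] := ltnP g x1.
- (* a1 = (x1 + f) / 2 with f ~ 'C(k, 2) / k.+1 of the parity of x1 makes up
     for the extra weight 'C(k, 2) of the odd x0 chip. *)
  have Ex1 : x1 - g = odd (x1 - g) + 2 * (x1 - g)./2.
    by rewrite mul2n odd_double_half.
  exists (g + odd (x1 - g) + (x1 - g)./2).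
  move: (odd (x1 - g)) ((x1 - g)./2) Ex1 => [] u Eu; split; lia.
- exists x1; have := leq_mul le_x1g (leqnn k); split; lia.
Qed.

Lemma safe_step k x : 8 <= k -> safe k.+1 x ->
  exists a, [/\ legal x a, safe k (yes_state x a) & safe k (no_state x a)].
Proof.
case: x => [[x0 x1] x2] le8k [wt_x x0_small x2_large /(_ le8k) wide].
have [a1 split_a1] : exists a1, balanced_split k (x0, x1, x2) a1.
  have [odd_x0 | even_x0] := boolP (odd x0).
  - exact: balanced_split_odd.
  - by exists x1./2; apply: balanced_split_even.
by exists (halving_question k (x0, x1, x2) a1); apply: halving_step.
Qed.

(* Written with [if] and [find] rather than [&&] and [has], so that
   [vm_compute] does not explore the subtrees it can skip. *)
Fixpoint perfectb (j : nat) (x : state) : bool :=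
  match j with
  | 0 => wt_closed 0 x == 1
  | k.+1 =>
      let good a :=
        if s2 a <= s2 x then
          if perfectb k (yes_state x a) then perfectb k (no_state x a)
          else false
        else false in
      if wt_closed j x == 2 ^ j then
        find (fun a1 => good (halving_question k x a1)) (iota 0 (s1 x).+1)
          <= s1 x
      else false
  end.

Lemma perfectbP j x : perfectb j x -> perfect j x.
Proof.
elim: j x => [|k IH] x; cbn [perfect perfectb]; first by rewrite wtE => /eqP.
case: eqP => // wt_x; set good := fun a1 => _ => found.
set a1 := find good _ in found.
have : good a1.
  have := @nth_find _ 0 good (iota 0 (s1 x).+1).
  by rewrite has_find size_iota ltnS nth_iota ?ltnS // add0n; apply.
rewrite /good; case: ifP => // le_a2; case: ifP => // yes_ok no_ok.
split; first by rewrite wtE.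
exists (halving_question k x a1); split; last by split; apply: IH.
have := odd_double_half (s0 x).
by rewrite /legal /halving_question /s0 /s1 /s2 /= in found le_a2 *; lia.
Qed.

Lemma perfectb8 :
  all (fun x0 => all (fun x1 =>
         let x2 := 256 - x0 * 37 - x1 * 9 in
         (16 <= x2) ==> perfectb 8 (x0, x1, x2))
       (iota 0 29))
    (iota 0 2).
Proof. by vm_compute. Qed.

Lemma safe8_perfect x : safe 8 x -> perfect 8 x.
Proof.
case: x => [[x0 x1] x2] [wt_x x0_small x2_large _]; apply: (@perfectbP 8).
rewrite wtE /wt_closed /s0 /s1 /s2 /= in wt_x x0_small x2_large.
have C82 := double_bin2 8; have [lt_x0 [lt_x1 ->]] :
  x0 < 2 /\ x1 < 29 /\ x2 = 256 - x0 * 37 - x1 * 9 by lia.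
move/allP/(_ x0): perfectb8; rewrite mem_iota => /(_ lt_x0)/allP/(_ x1).
by rewrite mem_iota => /(_ lt_x1)/implyP; apply; lia.
Qed.

Lemma safe_perfect k x : 8 <= k -> safe k x -> perfect k x.
Proof.
elim: k x => [|k IH] x // le8k safe_x.
move: le8k safe_x; rewrite leq_eqVlt => /predU1P [<-|le8k safe_x].
  exact: safe8_perfect.
have [a [legal_a safe_yes safe_no]] := safe_step le8k safe_x.
split; first by case: safe_x.
by exists a; split=> //; split; apply: IH le8k _.
Qed.

Lemma safe_start q x0 x1 x2 :
  23 <= q -> wt q (x0, x1, x2) = 2 ^ q -> q ^ 2 <= x2 -> safe q (x0, x1, x2).
Proof.
move=> le23q wt_x x2_large.
have T2 := double_bin2 q; have qq := leq_mul le23q (leqnn q).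
split=> //; last by right.
  have : x0 * 277 <= x0 * (q.+1 + 'C(q, 2)) by rewrite leq_mul2l; lia.
  by move: wt_x; rewrite wtE /wt_closed /s0 /=; lia.
by rewrite /s2 /=; lia.
Qed.

Theorem lemma16 (q x0 x1 x2 : nat) :
  23 <= q ->
  wt q (x0, x1, x2) = 2 ^ q ->
  q ^ 2 <= x2 ->
  perfect q (x0, x1, x2).
Proof.
move=> le23q wt_x x2_large; apply: safe_perfect; first exact: leq_trans le23q.
exact: safe_start.
Qed.
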